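(* Let $X$ be a hyperbolic approximation of a metric space $Z$, with vertex set $V$. Assume that for some $v,v'\in V$ there is a vertex $v''\in V$ with $l(v'')\le l(v)$, $l(v'')\le l(v')$, and such that $B(v'')$ intersects both $B(v)$ and $B(v')$. Then there exists a cone point $w$ of $\{v,v',v''\}$ with $l(w)=l(v'')-1$.
   Context: Hyperbolic approximation: let $(Z,d)$ be a metric space and fix $r$ with $0<r\le1/6$. For every $k\in\mathbb{Z}$ choose a maximal $r^k$-separated set $V_k\subset Z$ (distinct points at distance $\ge r^k$, maximal with this property). For $v\in V_k$ let $B(v)$ be the ball in $Z$ of radius $2r^k$ centred at $v$, $\bar B(v)$ the closed ball. The vertex set $V$ consists, for each $k$, of the balls $B(v)$, $v\in V_k$ (equal balls from the same level give the same vertex; equal balls at different levels are different vertices); a vertex from level $k$ has level $l(v)=k$. Two vertices are joined by an edge iff they are on the same level and their closed balls intersect (horizontal edge), or they are on neighbouring levels $k,k+1$ and the ball of the level-$(k+1)$ vertex is contained in the ball of the level-$k$ vertex (radial edge). $X$ carries the path metric with all edges of length $1$. A radial geodesic is an edge path all of whose edges are radial and along which the level function is monotone. For $V'\subset V$, a vertex $u$ is a cone point of $V'$ if $l(u)\le\inf_{v\in V'}l(v)$ and every $v\in V'$ is connected to $u$ by a radial geodesic. *)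

From Stdlib Require Import Reals ZArith List.
Open Scope R_scope.
Set Implicit Arguments.

Section HA.
Variable T : Type.
Variable d : T -> T -> R.

Definition is_metric : Prop :=
  (forall x y, 0 <= d x y) /\ (forall x y, d x y = 0 <-> x = y) /\
  (forall x y, d x y = d y x) /\ (forall x y z, d x z <= d x y + d y z).

Definition open_ball (v : T) (rad : R) : T -> Prop := fun x => d v x < rad.

Definition separated (eps : R) (S : T -> Prop) : Prop :=
  forall x y, S x -> S y -> x <> y -> eps <= d x y.

Definition maximal_separated (eps : R) (S : T -> Prop) : Prop :=
  separated eps S /\
  forall S' : T -> Prop, (forall x, S x -> S' x) -> separated eps S' ->
    forall x, S' x -> S x.

(* A vertex: a level k together with a ball (a subset of T).  Equal balls at
   the same level are the same vertex; equal balls at different levels are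
   different vertices. *)
Record vertex := mkVertex { lev : Z ; vball : T -> Prop }.

Variable r : R.
Variable Vk : Z -> T -> Prop.  (* the chosen maximal r^k-separated sets V_k *)

Definition is_vertex (w : vertex) : Prop :=
  exists v, Vk (lev w) v /\ vball w = open_ball v (2 * powerRZ r (lev w)).

Definition incl (A B : T -> Prop) : Prop := forall x, A x -> B x.
Definition intersects (A B : T -> Prop) : Prop := exists x, A x /\ B x.

Definition radial_edge (a b : vertex) : Prop :=
  (lev b = (lev a + 1)%Z /\ incl (vball b) (vball a)) \/
  (lev a = (lev b + 1)%Z /\ incl (vball a) (vball b)).

Fixpoint chain (Rel : vertex -> vertex -> Prop) (x : vertex) (l : list vertex)
  : Prop :=
  match l with
  | nil => True
  | y :: l' => Rel x y /\ chain Rel y l'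
  end.

Definition radial_geodesic_between (a b : vertex) : Prop :=
  exists p : list vertex,
    Forall is_vertex (a :: p) /\
    chain radial_edge a p /\
    (chain (fun x y => (lev x <= lev y)%Z) a p \/
     chain (fun x y => (lev y <= lev x)%Z) a p) /\
    last p a = b.

Definition cone_point (u : vertex) (S : vertex -> Prop) : Prop :=
  is_vertex u /\
  (forall v, S v -> (lev u <= lev v)%Z) /\
  (forall v, S v -> radial_geodesic_between v u).

End HA.

(* Let k be the level of v'' and let w be a level-(k-1) ball whose centre x lies within
   r^(k-1) of the centre of B(v''); w exists because V_(k-1) is a maximal
   r^(k-1)-separated set.  From any vertex t of level m >= k whose ball meets B(v'')
   one descends radially, level by level, choosing at level j a centre within r^j of
   the centre c of B(t).  All balls met on the way contain B(c, 2r^m), and since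
   r <= 1/6 each ball is contained in the next one; at level k the ball is close
   enough to B(v'') to be contained in w. *)

From Pilot Require Import Defs.
From Stdlib Require Import Reals ZArith List Lra Lia Classical.
Open Scope R_scope.
Set Implicit Arguments.
Unset Strict Implicit.

Lemma powerRZ_succ (x : R) (n : Z) : x <> 0 -> powerRZ x (Z.succ n) = x * powerRZ x n.
Proof.
  intros Hx; unfold Z.succ; rewrite powerRZ_add by exact Hx; simpl; ring.
Qed.

Lemma last_cons_default (A : Type) (p : list A) (a b : A) :
  last (b :: p) a = last p b.
Proof.
  revert a b; induction p as [|c p IH]; intros a b; [reflexivity|].
  change (last (c :: p) a = last (c :: p) b).
  rewrite !IH; reflexivity.
Qed.

Section MetricBalls.
Variables (T : Type) (d : T -> T -> R).
Hypothesis Hd : is_metric d.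

Lemma open_ball_incl (x y : T) (s t : R) :
  d x y + s <= t -> Defs.incl (open_ball d y s) (open_ball d x t).
Proof.
  destruct Hd as [_ [_ [_ Htri]]].
  intros Hst z Hz; unfold open_ball in *; pose proof (Htri x y z); lra.
Qed.

Lemma maximal_separated_net (eps : R) (S : T -> Prop) (q : T) :
  0 < eps -> maximal_separated d eps S -> exists y, S y /\ d q y < eps.
Proof.
  destruct Hd as [_ [Hzero [Hsym _]]].
  intros Heps [Hsep Hmax]; apply NNPP; intros Hfar.
  assert (Hq : S q).
  { apply (Hmax (fun x => S x \/ x = q)); auto.
    intros x y [Sx | ->] [Sy | ->] Hxy; auto.
    - rewrite Hsym; apply Rnot_lt_le; intros Hlt; eauto.
    - apply Rnot_lt_le; intros Hlt; eauto.
    - congruence. }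
  apply Hfar; exists q; split; [exact Hq|].
  rewrite (proj2 (Hzero q q) eq_refl); exact Heps.
Qed.

End MetricBalls.

Section HyperbolicApproximation.
Variables (T : Type) (d : T -> T -> R) (r : R) (Vk : Z -> T -> Prop).
Hypothesis Hd : is_metric d.
Hypothesis Hr : 0 < r <= 1/6.
Hypothesis HV : forall k : Z, maximal_separated d (powerRZ r k) (Vk k).

Local Notation is_vertex := (is_vertex d r Vk).

Definition ball_vertex (k : Z) (y : T) : vertex T :=
  mkVertex k (open_ball d y (2 * powerRZ r k)).

Lemma ball_vertex_is_vertex (k : Z) (y : T) : Vk k y -> is_vertex (ball_vertex k y).
Proof. intros Hy; exists y; split; [exact Hy | reflexivity]. Qed.

Definition descending_geodesic (a b : vertex T) : Prop :=
  exists p : list (vertex T),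
    Forall is_vertex (a :: p) /\
    chain (@radial_edge T) a p /\
    chain (fun x y => (lev y <= lev x)%Z) a p /\
    last p a = b.

Lemma descending_geodesic_refl (a : vertex T) :
  is_vertex a -> descending_geodesic a a.
Proof. intros Ha; exists nil; repeat split; auto. Qed.

Lemma descending_geodesic_cons (a b w : vertex T) :
  is_vertex a -> lev a = (lev b + 1)%Z -> Defs.incl (vball a) (vball b) ->
  descending_geodesic b w -> descending_geodesic a w.
Proof.
  intros Ha Hlev Hincl [p [Hp [Hedge [Hmono Hlast]]]].
  exists (b :: p); split; [|split; [|split]].
  - constructor; assumption.
  - split; [right; split|]; assumption.
  - split; [lia | assumption].
  - rewrite last_cons_default; exact Hlast.
Qed.

Lemma radial_geodesic_descending (a b : vertex T) :
  descending_geodesic a b -> radial_geodesic_between d r Vk a b.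
Proof.
  intros [p [Hp [Hedge [Hmono Hlast]]]]; exists p; auto.
Qed.

Lemma exists_near_center (k : Z) (q : T) : exists y, Vk k y /\ d q y < powerRZ r k.
Proof. apply maximal_separated_net; [exact Hd | apply powerRZ_lt; lra | apply HV]. Qed.

(* The invariant [d c y + s <= 2 r^j] says that the ball of radius 2 r^j about y
   contains the ball of radius s about c. *)
Lemma descent_step (c y : T) (s : R) (j : Z) :
  0 <= s -> d c y + s <= 2 * powerRZ r (Z.succ j) ->
  exists y1, Vk j y1 /\ d c y1 + s <= 2 * powerRZ r j /\
    Defs.incl (open_ball d y (2 * powerRZ r (Z.succ j))) (open_ball d y1 (2 * powerRZ r j)).
Proof.
  intros Hs Hinv.
  destruct (exists_near_center j c) as [y1 [Hy1 Hnear]].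
  pose proof Hd as [Hpos [_ [Hsym Htri]]].
  rewrite powerRZ_succ in Hinv by lra.
  assert (Hpj : 0 < powerRZ r j) by (apply powerRZ_lt; lra).
  assert (Hrpj : r * powerRZ r j <= powerRZ r j / 6) by nra.
  pose proof (Hpos c y).
  exists y1; split; [exact Hy1 | split].
  - lra.
  - apply open_ball_incl; [exact Hd|].
    rewrite powerRZ_succ by lra.
    pose proof (Htri y1 c y); rewrite (Hsym y1 c) in *; lra.
Qed.

Lemma descending_geodesic_to_target (c : T) (s : R) (k : Z) (w : vertex T) :
  0 <= s -> is_vertex w -> lev w = (k - 1)%Z ->
  (forall y, Vk k y -> d c y + s <= 2 * powerRZ r k ->
     Defs.incl (open_ball d y (2 * powerRZ r k)) (vball w)) ->
  forall j, (k <= j)%Z -> forall y, Vk j y -> d c y + s <= 2 * powerRZ r j ->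
    descending_geodesic (ball_vertex j y) w.
Proof.
  intros Hs Hw Hlw Hlast.
  apply (Z.le_ind (fun j => forall y, Vk j y -> d c y + s <= 2 * powerRZ r j ->
                              descending_geodesic (ball_vertex j y) w)).
  - intros j1 j2 ->; reflexivity.
  - intros y Hy Hinv.
    apply descending_geodesic_cons with (b := w); simpl; try lia; auto.
    + apply ball_vertex_is_vertex; exact Hy.
    + apply descending_geodesic_refl; exact Hw.
  - intros j _ IH y Hy Hinv.
    destruct (descent_step Hs Hinv) as [y1 [Hy1 [Hinv1 Hincl]]].
    apply descending_geodesic_cons with (b := ball_vertex j y1); simpl; auto.
    apply ball_vertex_is_vertex; exact Hy.
Qed.

Lemma descending_geodesic_to_cone_vertex (k : Z) (c'' x : T) (t : vertex T) :
  Vk (k - 1)%Z x -> d c'' x < powerRZ r (k - 1) ->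
  is_vertex t -> (k <= lev t)%Z ->
  intersects (open_ball d c'' (2 * powerRZ r k)) (vball t) ->
  descending_geodesic t (ball_vertex (k - 1) x).
Proof.
  intros Hx Hnear [c [Hc Hball]] Hlev [p [Hp'' Hpt]].
  destruct t as [m B]; simpl in *; subst B; unfold open_ball in Hp'', Hpt.
  pose proof Hd as [_ [Hzero [Hsym Htri]]].
  assert (Hpm : 0 < powerRZ r m) by (apply powerRZ_lt; lra).
  assert (Hpk : 0 < powerRZ r (k - 1)) by (apply powerRZ_lt; lra).
  assert (Hstep : powerRZ r k = r * powerRZ r (k - 1)).
  { replace k with (Z.succ (k - 1)) at 1 by lia; apply powerRZ_succ; lra. }
  change (mkVertex m _) with (ball_vertex m c).
  apply (descending_geodesic_to_target (c := c) (s := 2 * powerRZ r m) (k := k));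
    simpl; auto; try lra.
  - apply ball_vertex_is_vertex; exact Hx.
  - intros y _ Hy; apply open_ball_incl; [exact Hd|].
    pose proof (Htri x c'' y); pose proof (Htri c'' p y); pose proof (Htri p c y).
    rewrite (Hsym x c''), (Hsym p c) in *; nra.
  - rewrite (proj2 (Hzero c c) eq_refl); lra.
Qed.

End HyperbolicApproximation.

Theorem lemma3p9 (T : Type) (d : T -> T -> R) (Hd : is_metric d)
  (r : R) (Hr : 0 < r <= 1/6) (Vk : Z -> T -> Prop)
  (HV : forall k : Z, maximal_separated d (powerRZ r k) (Vk k))
  (v v' v'' : vertex T)
  (Hv : is_vertex d r Vk v) (Hv' : is_vertex d r Vk v')
  (Hv'' : is_vertex d r Vk v'')
  (Hl : (lev v'' <= lev v)%Z) (Hl' : (lev v'' <= lev v')%Z)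
  (Hi : intersects (vball v'') (vball v))
  (Hi' : intersects (vball v'') (vball v')) :
  exists w : vertex T,
    cone_point d r Vk w (fun x => x = v \/ x = v' \/ x = v'') /\
    lev w = (lev v'' - 1)%Z.
Proof.
  pose proof Hv'' as [c'' [Hc'' Hball'']].
  destruct (exists_near_center Hd Hr HV (lev v'' - 1) c'') as [x [Hx Hnear]].
  exists (ball_vertex d r (lev v'' - 1) x); split; [|reflexivity].
  assert (Hself : intersects (vball v'') (vball v'')).
  { exists c''; rewrite Hball''; unfold open_ball.
    rewrite (proj2 (proj1 (proj2 Hd) c'' c'') eq_refl).
    pose proof (powerRZ_lt r (lev v'') (proj1 Hr)); split; lra. }
  split; [|split].
  - apply ball_vertex_is_vertex; exact Hx.
  - simpl; intros u [-> | [-> | ->]]; lia.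
  - intros u [-> | [-> | ->]]; apply radial_geodesic_descending;
      apply (descending_geodesic_to_cone_vertex Hd Hr HV Hx Hnear); auto; try lia;
      rewrite <- Hball''; assumption.
Qed.
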